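(* Let $\mathsf{C}\subset V$ be a proper cone, $\phi$ in the interior of $\mathsf{C}^*$, $k\ge1$, and assume $\gamma_k^\phi$ is entanglement-breaking (so that $K_\phi=\mathsf{C}\cap\phi^{-1}(1)$ is a polytope). Then $\gamma_k^\phi$, as a tensor in $(V^* )^{\otimes k}\otimes V$, belongs to the cone generated by the elements $\psi_{F_1}\otimes\cdots\otimes\psi_{F_k}\otimes x$ where $(F_1,\dots,F_k,x)\in\mathcal F(K_\phi)^k\times\mathcal V(K_\phi)$ is admissible.
   Context: Proper cone: closed convex cone in a finite-dimensional real vector space, containing no line, not contained in a hyperplane; $\mathsf{C}^*$ is its dual cone; $\mathsf{C}_1\otimes_{\min}\mathsf{C}_2=\mathrm{conv}\{x\otimes y:x\in\mathsf{C}_1,y\in\mathsf{C}_2\}$. $\gamma_k^\phi=\frac1k\sum_{j=1}^k\phi^{\otimes(j-1)}\otimes\mathrm{Id}_V\otimes\phi^{\otimes(k-j)}$, viewed as a tensor in $(V^* )^{\otimes k}\otimes V$, is entanglement-breaking if it belongs to $(\mathsf{C}^* )^{\otimes_{\min}k}\otimes_{\min}\mathsf{C}$. For a polytope $P$, $\mathcal V(P)$ is its vertex set and $\mathcal F(P)$ its set of facets. For each facet $F\in\mathcal F(K_\phi)$, $\psi_F\in\mathsf{C}^*$ is a linear form with $F=K_\phi\cap\ker\psi_F$ (unique up to positive scalar). The avoiding set of a vertex $x$ is $\mathrm{Av}(x)=\{F\in\mathcal F(K_\phi):x\notin F\}$, and a tuple $(F_1,\dots,F_k,x)\in\mathcal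 F(K_\phi)^k\times\mathcal V(K_\phi)$ is admissible if $\mathrm{Av}(x)\subset\{F_1,\dots,F_k\}$. *)

From HB Require Import structures.
From mathcomp Require Import all_boot all_order all_algebra.
From mathcomp Require Import all_classical all_reals all_analysis.
Set Implicit Arguments. Unset Strict Implicit. Unset Printing Implicit Defensive.
Import Order.TTheory GRing.Theory Num.Theory.
Import numFieldNormedType.Exports.
Local Open Scope classical_set_scope.
Local Open Scope ring_scope.

(* V = R^n, realised as row vectors 'rV[R]_n; V^dual is identified with 'rV[R]_n
   through the standard pairing below (phi x = \sum_i phi_i x_i). *)
Section Defs.
Variable R : realType.

Definition pairing (n : nat) (phi x : 'rV[R]_n) : R := \sum_(i < n) phi 0 i * x 0 i.

Definition is_cone (n : nat) (C : set 'rV[R]_n) : Prop :=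
  C 0 /\ (forall x y, C x -> C y -> C (x + y)) /\
  (forall (a : R) x, 0 <= a -> C x -> C (a *: x)).

Definition proper_cone (n : nat) (C : set 'rV[R]_n) : Prop :=
  [/\ is_cone C, closed C,
      (forall x, C x -> C (- x) -> x = 0) &
      (forall a : 'rV[R]_n, (forall x, C x -> pairing a x = 0) -> a = 0)].

Definition dual_cone (n : nat) (C : set 'rV[R]_n) : set 'rV[R]_n :=
  [set a | forall x, C x -> 0 <= pairing a x].

(* Tensors in (V^dual)^{[tensor]k} [tensor] V, represented by their coordinates in the
   standard basis: index (f, i) with f : 'I_k -> 'I_n (the k dual factors)
   and i : 'I_n (the last factor V). *)
Definition tidx (k n : nat) := ({ffun 'I_k -> 'I_n} * 'I_n)%type.
Definition tensor (k n : nat) := {ffun tidx k n -> R}.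

Definition etensor (k n : nat) (psis : 'I_k -> 'rV[R]_n) (x : 'rV[R]_n)
  : tensor k n :=
  [ffun p : tidx k n => (\prod_(j < k) psis j 0 (p.1 j)) * x 0 p.2].

(* gamma_k^phi = 1/k sum_j phi^{[tensor](j-1)} [tensor] Id_V [tensor] phi^{[tensor](k-j)},
   where Id_V = sum_a e_a^* [tensor] e_a sits in the j-th dual factor and the
   final V factor. *)
Definition gamma (k n : nat) (phi : 'rV[R]_n) : tensor k n :=
  [ffun p : tidx k n => k%:R^-1 *
     \sum_(j < k) ((\prod_(l < k | l != j) phi 0 (p.1 l)) * (p.1 j == p.2)%:R)].

(* (C^dual)^{[tensor]_min k} [tensor]_min C : convex hull of elementary tensors
   psi_1 [tensor] ... [tensor] psi_k [tensor] x with psi_j in C^dual and x in C *)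

Definition min_tensor_cone (k n : nat) (C : set 'rV[R]_n) : set (tensor k n) :=
  [set t | exists m (lam : 'I_m -> R) (psis : 'I_m -> 'I_k -> 'rV[R]_n)
             (xs : 'I_m -> 'rV[R]_n),
     [/\ (forall i, 0 <= lam i), \sum_(i < m) lam i = 1,
         (forall i j, dual_cone C (psis i j)), (forall i, C (xs i)) &
         t = \sum_(i < m) lam i *: etensor (psis i) (xs i)]].


Definition entanglement_breaking (k n : nat) (C : set 'rV[R]_n) (phi : 'rV[R]_n)
  : Prop := @min_tensor_cone k n C (@gamma k n phi).


Definition cone_gen (k n : nat) (S : set (tensor k n)) : set (tensor k n) :=
  [set t | exists m (mu : 'I_m -> R) (ts : 'I_m -> tensor k n),
     [/\ (forall i, 0 <= mu i), (forall i, S (ts i)) &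
         t = \sum_(i < m) mu i *: ts i]].

Definition Kphi (n : nat) (C : set 'rV[R]_n) (phi : 'rV[R]_n) : set 'rV[R]_n :=
  [set x | C x /\ pairing phi x = 1].

(* faces of a (convex) set K (as for polytopes, faces are the sets cut out
   by valid linear inequalities; this includes the empty face and K) *)
Definition face (n : nat) (K F : set 'rV[R]_n) : Prop :=
  exists (a : 'rV[R]_n) (c : R),
    (forall x, K x -> c <= pairing a x) /\ F = [set x | K x /\ pairing a x = c].

Definition facet (n : nat) (K F : set 'rV[R]_n) : Prop :=
  [/\ face K F, F <> K &
      forall G, face K G -> F `<=` G -> G = F \/ G = K].

Definition vertex (n : nat) (K : set 'rV[R]_n) (x : 'rV[R]_n) : Prop :=
  face K [set x].

Definition admissible (k n : nat) (K : set 'rV[R]_n)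
  (Fs : 'I_k -> set 'rV[R]_n) (x : 'rV[R]_n) : Prop :=
  [/\ (forall j, facet K (Fs j)), vertex K x &
      forall F, facet K F -> ~ F x -> exists j, Fs j = F].

End Defs.

Arguments gamma {R} k {n} phi.
Arguments min_tensor_cone {R} k {n} C.
Arguments entanglement_breaking {R} k {n} C phi.

From HB Require Import structures.
From mathcomp Require Import all_boot all_order all_algebra.
From mathcomp Require Import all_classical all_reals all_analysis.
From mathcomp Require Import ring lra.
Set Implicit Arguments. Unset Strict Implicit. Unset Printing Implicit Defensive.
Import Order.TTheory GRing.Theory Num.Theory.
Import numFieldNormedType.Exports.
Local Open Scope classical_set_scope.
Local Open Scope ring_scope.

(** Evaluating [gamma] on [(y, ..., y, a)] shows that [phi(y)^(k-1) y] is a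
   nonnegative combination of the vectors [x_i] of an entanglement-breaking
   decomposition [gamma = sum_i lam_i psi_i1 ⊗ ... ⊗ psi_ik ⊗ x_i]; hence [C]
   is polyhedral.  Its dual is then generated by its extreme rays, which are
   positive multiples of the facet normals [psi_F], and [C] itself is generated
   by its extreme rays, which are the rays through the vertices of [K_phi].
   Expanding every [psi_ij] and every [x_i] along these rays writes [gamma] as a
   nonnegative combination of tensors [psi_F1 ⊗ ... ⊗ psi_Fk ⊗ v], where each
   [F_j] contains the zero set of [psi_ij] on [K_phi] and every facet avoiding
   [v] avoids [x_i].  Such a tuple is admissible: evaluating [gamma] on
   [(y_1, ..., y_k, psi_G)] with all [y_j] in a facet [G] gives [0], so when
   [psi_G(x_i) > 0] some [psi_ij] vanishes on [G], which forces [F_j = G]. *)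

Section Pairing.
Variables (R : realType) (n : nat).
Implicit Types a b x y : 'rV[R]_n.

Lemma pairingC a x : pairing a x = pairing x a.
Proof. by apply: eq_bigr => i _; rewrite mulrC. Qed.

Lemma pairing_mx a x : pairing a x = (a *m x^T) 0 0.
Proof. by rewrite mxE; apply: eq_bigr => i _; rewrite !mxE. Qed.

Lemma pairingDl a b x : pairing (a + b) x = pairing a x + pairing b x.
Proof. by rewrite !pairing_mx mulmxDl mxE. Qed.

Lemma pairingZl (c : R) a x : pairing (c *: a) x = c * pairing a x.
Proof. by rewrite !pairing_mx -scalemxAl mxE. Qed.

Lemma pairing0l x : pairing 0 x = 0.
Proof. by rewrite pairing_mx mul0mx mxE. Qed.

Lemma pairingNl a x : pairing (- a) x = - pairing a x.
Proof. by rewrite -scaleN1r pairingZl mulN1r. Qed.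

Lemma pairingBl a b x : pairing (a - b) x = pairing a x - pairing b x.
Proof. by rewrite pairingDl pairingNl. Qed.

Lemma pairing_suml (I : Type) (r : seq I) (P : pred I) (F : I -> 'rV[R]_n) x :
  pairing (\sum_(i <- r | P i) F i) x = \sum_(i <- r | P i) pairing (F i) x.
Proof.
elim/big_rec2: _ => [|i y1 y2 _ <-]; first by rewrite pairing0l.
by rewrite pairingDl.
Qed.

Lemma pairingZr (c : R) a x : pairing a (c *: x) = c * pairing a x.
Proof. by rewrite pairingC pairingZl pairingC. Qed.

Lemma pairing0r a : pairing a 0 = 0.
Proof. by rewrite pairingC pairing0l. Qed.

Lemma pairingNr a x : pairing a (- x) = - pairing a x.
Proof. by rewrite pairingC pairingNl pairingC. Qed.

Lemma pairingBr a x y : pairing a (x - y) = pairing a x - pairing a y.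
Proof. by rewrite !(pairingC a) pairingBl. Qed.

Lemma pairing_sumr (I : Type) (r : seq I) (P : pred I) (F : I -> 'rV[R]_n) a :
  pairing a (\sum_(i <- r | P i) F i) = \sum_(i <- r | P i) pairing a (F i).
Proof. by rewrite pairingC pairing_suml; apply: eq_bigr => i _; rewrite pairingC. Qed.

Lemma pairing_self_ge0 a : 0 <= pairing a a.
Proof. by apply: sumr_ge0 => i _; rewrite -expr2 sqr_ge0. Qed.

Lemma pairing_self_eq0 a : pairing a a = 0 -> a = 0.
Proof.
move=> aa0; apply/rowP => i; rewrite mxE; apply/eqP; rewrite -sqrf_eq0; apply/eqP.
have sq_ge0 j : 0 <= a 0 j ^+ 2 by rewrite sqr_ge0.
have sq_sum0 : \sum_(j < n | true) a 0 j ^+ 2 = 0.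
  by rewrite -[RHS]aa0; apply: eq_bigr => j _; rewrite expr2.
exact: (psumr_eq0P (fun j _ => sq_ge0 j) sq_sum0).
Qed.

Lemma pairing_inj x y : (forall a, pairing a x = pairing a y) -> x = y.
Proof.
move=> h; apply/eqP; rewrite -subr_eq0; apply/eqP; apply: pairing_self_eq0.
by rewrite pairingBr h subrr.
Qed.

Lemma pairing_shear u e x z :
  pairing (u - (pairing u z / pairing e z) *: e) x =
  pairing u (x - (pairing e x / pairing e z) *: z).
Proof. by rewrite pairingBl pairingBr pairingZl pairingZr; ring. Qed.

Lemma pairing_sum_eq0 q (mu : 'I_q -> R) (w : 'I_q -> 'rV[R]_n) x l :
  (forall l, 0 <= mu l) -> (forall l, 0 < mu l -> 0 <= pairing (w l) x) ->
  pairing (\sum_l mu l *: w l) x = 0 -> 0 < mu l -> pairing (w l) x = 0.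
Proof.
move=> mu_ge0 w_ge0 sum0 mu_gt0.
have term_ge0 l' : 0 <= mu l' * pairing (w l') x.
  move: (mu_ge0 l'); rewrite le0r => /orP[/eqP->|/[dup] /w_ge0 w_ge0' /ltW mu_ge0'].
    by rewrite mul0r.
  exact: mulr_ge0.
move: sum0; rewrite pairing_suml; under eq_bigr do rewrite pairingZl.
by move=> /(psumr_eq0P (fun l' _ => term_ge0 l')) /(_ l isT) /eqP;
   rewrite mulf_eq0 gt_eqF //= => /eqP.
Qed.

End Pairing.

Section ConicHull.
Variables (R : realType) (V : lmodType R).
Implicit Types (A P : set V) (v : V).

Definition is_conic P :=
  P 0 /\ (forall u v, P u -> P v -> P (u + v)) /\
  (forall (c : R) v, 0 <= c -> P v -> P (c *: v)).

Definition conic_hull A : set V :=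
  [set v | exists q (mu : 'I_q -> R) (w : 'I_q -> V),
     [/\ forall l, 0 <= mu l, forall l, A (w l) & v = \sum_(l < q) mu l *: w l]].

Lemma conic_sum P q (mu : 'I_q -> R) (w : 'I_q -> V) : is_conic P ->
  (forall l, 0 <= mu l) -> (forall l, 0 < mu l -> P (w l)) ->
  P (\sum_l mu l *: w l).
Proof.
case=> P0 [PD PZ]; elim: q mu w => [|q IH] mu w mu_ge0 Pw; first by rewrite big_ord0.
rewrite big_ord_recr /=; apply: PD; first by apply: IH => // l /Pw.
move: (mu_ge0 ord_max); rewrite le0r => /orP[/eqP->|/[dup] /Pw Pw' /ltW mu_ge0'].
  by rewrite scale0r.
exact: PZ.
Qed.

Lemma sub_conic_hull A : A `<=` conic_hull A.
Proof.
by move=> v Av; exists 1%N, (fun=> 1), (fun=> v); split; rewrite // big_ord1 scale1r.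
Qed.

Lemma is_conic_hull A : is_conic (conic_hull A).
Proof.
split; first by exists 0%N, (fun=> 0), (fun=> 0); split; rewrite ?big_ord0 //; case.
split=> [u v [q1 [mu1 [w1 [mu1_ge0 Aw1 ->]]]] [q2 [mu2 [w2 [mu2_ge0 Aw2 ->]]]]
        |c u c_ge0 [q [mu [w [mu_ge0 Aw ->]]]]].
  pose glue T (f1 : 'I_q1 -> T) (f2 : 'I_q2 -> T) i :=
    match fintype.split i with inl l => f1 l | inr l => f2 l end.
  exists (q1 + q2)%N, (glue _ mu1 mu2), (glue _ w1 w2); split.
  - by move=> i; rewrite /glue; case: fintype.split.
  - by move=> i; rewrite /glue; case: fintype.split.
  - by rewrite big_split_ord /glue; congr (_ + _); apply: eq_bigr => l _;
      [rewrite (unsplitK (inl l))|rewrite (unsplitK (inr l))].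
exists q, (fun l => c * mu l), w; split => // [l|]; first exact: mulr_ge0.
by rewrite scaler_sumr; apply: eq_bigr => l _; rewrite scalerA.
Qed.

Lemma conic_hull_min A P : is_conic P -> A `<=` P -> conic_hull A `<=` P.
Proof.
by move=> cP AP v [q [mu [w [mu_ge0 Aw ->]]]]; apply: conic_sum => // l _; apply: AP.
Qed.

End ConicHull.

Lemma is_conic_pairing_ge0 (R : realType) n (x : 'rV[R]_n) :
  is_conic [set w | 0 <= pairing w x].
Proof.
split; first by rewrite /= pairing0l.
by split=> [u v|c u] /=; rewrite ?pairingDl ?pairingZl; [exact: addr_ge0|exact: mulr_ge0].
Qed.

Lemma vertex_mem (R : realType) n (K : set 'rV[R]_n) v : vertex K v -> K v.
Proof. by case=> a [c [_ /seteqP[/(_ v erefl) []]]]. Qed.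

Lemma interior_shift (R : realType) n (A : set 'rV[R]_n) p (y : 'rV[R]_n) :
  interior A p -> exists2 d, 0 < d & A (p - d *: y).
Proof.
move=> /nbhs_ballP [e e_gt0 ballA]; have y_ge0 : 0 <= `|y| by [].
have den_gt0 : 0 < 2 * (`|y| + 1) by lra.
have d_gt0 : 0 < e / (2 * (`|y| + 1)) by apply: divr_gt0.
exists (e / (2 * (`|y| + 1))) => //.
apply: ballA; rewrite -ball_normE /ball_ /= opprB addrC subrK normrZ gtr0_norm //.
by rewrite mulrAC ltr_pdivrMr // ltr_pM2l //; lra.
Qed.

Section Farkas.
Variables (R : realType) (n : nat).

Lemma farkas m (a : 'I_m -> 'rV[R]_n) b :
  (forall x, (forall i, 0 <= pairing (a i) x) -> 0 <= pairing b x) ->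
  exists lam : 'I_m -> R, (forall i, 0 <= lam i) /\ b = \sum_i lam i *: a i.
Proof.
elim: m a b => [|m IH] a b b_dual.
  exists (fun=> 0); split=> //; rewrite big_ord0; apply: pairing_self_eq0.
  apply/eqP; rewrite eq_le pairing_self_ge0 andbT -oppr_ge0 -pairingNr.
  by apply: b_dual => -[].
pose e := a ord0; pose a' j := a (lift ord0 j).
have extend (lam' : 'I_m -> R) c : (forall j, 0 <= lam' j) -> 0 <= c ->
    b = c *: e + \sum_j lam' j *: a' j ->
    exists lam, (forall i, 0 <= lam i) /\ b = \sum_i lam i *: a i.
  move=> lam'_ge0 c_ge0 ->; exists (fun i => oapp lam' c (unlift ord0 i)).
  split; first by move=> i; case: (unliftP ord0 i) => [j _|_] /=.
  by rewrite big_ord_recl unlift_none; under [in RHS]eq_bigr do rewrite liftK.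
have [a'_b|/existsNP [z /not_implyP [a'z /negP]]] :=
  pselect (forall x, (forall j, 0 <= pairing (a' j) x) -> 0 <= pairing b x).
  have [lam' [lam'_ge0 bE]] := IH a' b a'_b.
  by apply: (extend lam' 0) => //; rewrite scale0r add0r.
rewrite -ltNge => bz_lt0.
(* Eliminate [e] by shearing along [z], on which [e] is negative. *)
have ez_lt0 : pairing e z < 0.
  rewrite ltNge; apply/negP => ez_ge0; move: bz_lt0; rewrite ltNge b_dual //.
  by move=> i; case: (unliftP ord0 i) => [j ->|->]; [exact: a'z|exact: ez_ge0].
pose shear u := u - (pairing u z / pairing e z) *: e.
have [lam' [lam'_ge0 shear_b]] :
    exists lam' : 'I_m -> R, (forall j, 0 <= lam' j) /\
      shear b = \sum_j lam' j *: shear (a' j).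
  apply: IH => x x_dual; rewrite pairing_shear; apply: b_dual => i.
  case: (unliftP ord0 i) => [j ->|->]; first by rewrite -pairing_shear; exact: x_dual.
  by rewrite pairingBr pairingZr mulfVK ?subrr // lt_eqF.
pose S := \sum_j lam' j * pairing (a' j) z.
have S_ge0 : 0 <= S by apply: sumr_ge0 => j _; apply: mulr_ge0.
apply: (extend lam' ((S - pairing b z) / - pairing e z)) => //.
  by apply: divr_ge0; [rewrite subr_ge0 (le_trans (ltW bz_lt0))|rewrite oppr_ge0 ltW].
have sum_shear :
    \sum_j lam' j *: shear (a' j) = \sum_j lam' j *: a' j - (S / pairing e z) *: e.
  rewrite mulr_suml scaler_suml -sumrB; apply: eq_bigr => j _.
  by rewrite scalerBr scalerA mulrA.
move: shear_b; rewrite sum_shear => /(canRL (subrK _)) bE; rewrite {1}bE.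
rewrite -addrA [X in _ + X]addrC -scalerBl addrC; congr (_ *: _ + _).
by rewrite invrN mulrN -mulNr opprB mulrBl.
Qed.

End Farkas.

Section CorankOne.
Variables (R : realType) (n : nat).

Lemma mul_tr_eq0P q (M : 'M[R]_(q, n)) (z : 'rV[R]_n) :
  (M *m z^T = 0) <-> (z <= kermx M^T)%MS.
Proof.
rewrite sub_kermx; split => [Mz0|/eqP zM0].
  by rewrite -[z *m _]trmxK trmx_mul trmxK Mz0 trmx0.
by rewrite -[M *m _]trmxK trmx_mul trmxK zM0 trmx0.
Qed.

Lemma ann_rank_lt q (M : 'M[R]_(q, n)) (z : 'rV[R]_n) :
  z != 0 -> M *m z^T = 0 -> (\rank M < n)%N.
Proof.
move=> z0 /mul_tr_eq0P /mxrankS; rewrite mxrank_ker mxrank_tr rank_rV z0.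
by rewrite subn_gt0.
Qed.

Lemma rank_lt_ann q (M : 'M[R]_(q, n)) :
  (\rank M < n)%N -> exists2 d : 'rV[R]_n, d != 0 & M *m d^T = 0.
Proof.
move=> rM; have : kermx M^T != 0.
  by rewrite -mxrank_eq0 mxrank_ker mxrank_tr -lt0n subn_gt0.
by case/rowV0Pn => d /mul_tr_eq0P dM d0; exists d.
Qed.

Lemma corank1_ann_colinear q (M : 'M[R]_(q, n)) (y z : 'rV[R]_n) :
  \rank M = n.-1 -> z != 0 -> M *m z^T = 0 -> M *m y^T = 0 ->
  exists c, y = c *: z.
Proof.
move=> rM z0 Mz /mul_tr_eq0P yk.
have n_gt0 := leq_ltn_trans (leq0n _) (ann_rank_lt z0 Mz).
move/mul_tr_eq0P: Mz => zk.
have rk : \rank (kermx M^T) = 1%N.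
  by rewrite mxrank_ker mxrank_tr rM -subn1 subKn.
have kz : (kermx M^T <= z)%MS.
  by have /leqifP := mxrank_leqif_sup zk; rewrite rk rank_rV z0; case: ifP.
have /submxP [D ->] := submx_trans yk kz.
by exists (D 0 0); rewrite {1}(mx11_scalar D) mul_scalar_mx.
Qed.

Definition tight_mx p (g : 'I_p -> 'rV[R]_n) (psi : 'rV[R]_n) : 'M[R]_(p, n) :=
  \matrix_(i, j) (if pairing psi (g i) == 0 then g i 0 j else 0).

Lemma row_tight_mx p (g : 'I_p -> 'rV[R]_n) psi i :
  row i (tight_mx g psi) = if pairing psi (g i) == 0 then g i else 0.
Proof. by apply/rowP => j; rewrite !mxE; case: ifP => //; rewrite mxE. Qed.

Lemma tight_mx_ann p (g : 'I_p -> 'rV[R]_n) psi y :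
  (tight_mx g psi *m y^T = 0) <->
  (forall i, pairing psi (g i) = 0 -> pairing (g i) y = 0).
Proof.
have entry i : (tight_mx g psi *m y^T) i 0 =
    if pairing psi (g i) == 0 then pairing (g i) y else 0.
  rewrite mxE; case: ifP => psi_gi; first by apply: eq_bigr => j _; rewrite !mxE psi_gi.
  by apply: big1 => j _; rewrite !mxE psi_gi mul0r.
split=> [ann i psi_gi|ann].
  by move/matrixP/(_ i 0): ann; rewrite entry psi_gi eqxx mxE.
by apply/matrixP => i j; rewrite (ord1 j) entry mxE; case: ifP => // /eqP /ann.
Qed.

Lemma tight_mx_self p (g : 'I_p -> 'rV[R]_n) psi : tight_mx g psi *m psi^T = 0.
Proof. by apply/tight_mx_ann => i; rewrite pairingC. Qed.

End CorankOne.

Section ExtremeRays.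
Variables (R : realType) (n p : nat) (g : 'I_p -> 'rV[R]_n).
Hypothesis g_span : forall d, (forall i, pairing d (g i) = 0) -> d = 0.

Definition hcone : set 'rV[R]_n := [set psi | forall i, 0 <= pairing psi (g i)].

(* Extremality is encoded by the rank of the inequalities tight at [psi]. *)
Definition extreme_ray psi :=
  [/\ hcone psi, psi != 0 & \rank (tight_mx g psi) = n.-1].

Lemma hcone_sum_gt0 psi : hcone psi -> psi != 0 -> 0 < pairing psi (\sum_i g i).
Proof.
move=> psi_h psi0; rewrite pairing_sumr lt_neqAle sumr_ge0 // andbT.
apply/eqP => /esym sum0; move/eqP: psi0; apply; apply: g_span => i.
exact: (psumr_eq0P (fun i _ => psi_h i) sum0).
Qed.

Lemma hcone_move psi d : hcone psi -> tight_mx g psi *m d^T = 0 ->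
  pairing d (\sum_i g i) = 0 -> d != 0 ->
  exists2 t, 0 < t & hcone (psi + t *: d) /\
    (\rank (tight_mx g psi) < \rank (tight_mx g (psi + t *: d)))%N.
Proof.
move=> psi_h /tight_mx_ann d_tight d_sum d0.
have [i0 di0_lt0] : exists i, pairing d (g i) < 0.
  apply/not_existsP => d_ge0.
  have d_h : hcone d by move=> i; rewrite leNgt; apply/negP/d_ge0.
  by have := hcone_sum_gt0 d_h d0; rewrite d_sum ltxx.
pose P i := pairing d (g i) < 0.
pose ratio i := pairing psi (g i) / - pairing d (g i).
case: (@Order.TotalTheory.arg_minP _ _ _ i0 P ratio di0_lt0) => i1 Pi1 ratio_min.
have psi_gt0 i : P i -> 0 < pairing psi (g i).
  move=> Pi; rewrite lt_neqAle psi_h andbT eq_sym; apply/eqP => /d_tight.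
  by rewrite pairingC => di0; move: Pi; rewrite /P di0 ltxx.
have ratio_gt0 : 0 < ratio i1 by apply: divr_gt0; [exact: psi_gt0|rewrite oppr_gt0].
exists (ratio i1) => //.
set psi' := psi + ratio i1 *: d.
have psi'_gi1 : pairing psi' (g i1) = 0.
  by rewrite pairingDl pairingZl /ratio invrN mulrN mulNr divfK ?subrr // lt_eqF.
split.
  move=> i; rewrite pairingDl pairingZl; case: (leP 0 (pairing d (g i))) => di.
    by rewrite addr_ge0 // mulr_ge0 // ltW.
  by rewrite -[X in _ + X]opprK -mulrN subr_ge0 -ler_pdivlMr ?oppr_gt0 //; apply: ratio_min.
have tight_sub : (tight_mx g psi <= tight_mx g psi')%MS.
  apply/row_subP => i; rewrite row_tight_mx.
  case: ifP => [/eqP psi_gi|_]; last exact: sub0mx.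
  have psi'_gi : pairing psi' (g i) == 0.
    by rewrite pairingDl pairingZl psi_gi (pairingC d) d_tight // mulr0 addr0.
  by rewrite -(_ : row i (tight_mx g psi') = g i) ?row_sub // row_tight_mx psi'_gi.
apply: rank_ltmx; rewrite ltmxE tight_sub /=; apply/negP => sup.
have /submxP [D gi1E] : (g i1 <= tight_mx g psi)%MS.
  apply: submx_trans sup; rewrite -(_ : row i1 (tight_mx g psi') = g i1) ?row_sub //.
  by rewrite row_tight_mx psi'_gi1 eqxx.
have : pairing (g i1) d = 0.
  by rewrite pairing_mx gi1E -mulmxA (proj2 (tight_mx_ann _ _ _)) ?mulmx0 ?mxE.
by rewrite pairingC => di1; move: Pi1; rewrite /P di1 ltxx.
Qed.

Lemma hcone_conic_extreme psi : hcone psi -> conic_hull extreme_ray psi.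
Proof.
have [N] := ubnP (n - \rank (tight_mx g psi)); elim: N psi => // N IH psi rk_lt psi_h.
have [cone0 [coneD coneZ]] := is_conic_hull extreme_ray.
have [->//|psi0] := eqVneq psi 0.
have rk_n := ann_rank_lt psi0 (tight_mx_self g psi).
have [rk_e|rk_ne] := eqVneq (\rank (tight_mx g psi)) n.-1; first exact: sub_conic_hull.
(* Otherwise some [d] kills the tight rows and [\sum_i g i]; moving from [psi]
   along [d] and [-d] makes new rows tight, and [psi] lies between the two
   endpoints. *)
have [d d0 dA] : exists2 d : 'rV[R]_n, d != 0 &
    col_mx (tight_mx g psi) (\sum_i g i) *m d^T = 0.
  apply: rank_lt_ann; rewrite -addsmxE.
  apply: leq_ltn_trans (mxrank_adds_leqif _ _) _.
  rewrite (leq_ltn_trans (leq_add (leqnn _) (rank_leq_row _))) // addn1 -ltn_predRL.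
  by rewrite ltn_neqAle rk_ne -ltnS prednK // (leq_ltn_trans (leq0n _) rk_n).
move: dA; rewrite mul_col_mx => /eqP; rewrite col_mx_eq0 => /andP[/eqP d_tight /eqP d_sum].
have {}d_sum : pairing d (\sum_i g i) = 0 by rewrite pairingC pairing_mx d_sum mxE.
have [t1 t1_gt0 [h1 r1]] := hcone_move psi_h d_tight d_sum d0.
have [t2 t2_gt0 [h2 r2]] : exists2 t, 0 < t & hcone (psi + t *: - d) /\
    (\rank (tight_mx g psi) < \rank (tight_mx g (psi + t *: - d)))%N.
  apply: hcone_move => //; first by rewrite raddfN mulmxN d_tight oppr0.
    by rewrite pairingNl d_sum oppr0.
  by rewrite oppr_eq0.
have rk_lt' (M : 'M[R]_(p, n)) :
    (\rank (tight_mx g psi) < \rank M)%N -> (n - \rank M < N)%N.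
  by move=> rM; apply: leq_trans (ltn_sub2l rk_n rM) rk_lt.
have -> : psi = (t2 / (t1 + t2)) *: (psi + t1 *: d) + (t1 / (t1 + t2)) *: (psi + t2 *: - d).
  rewrite !scalerDr !scalerA scalerN [t2 / _ * t1]mulrAC [t1 / _ * t2]mulrAC [t2 * t1]mulrC.
  by rewrite addrACA subrr addr0 -scalerDl -mulrDl addrC divff ?scale1r // gt_eqF ?addr_gt0.
by apply: coneD; apply: coneZ; rewrite ?divr_ge0 ?addr_ge0 ?ltW //; apply: IH => //;
  exact: rk_lt'.
Qed.

End ExtremeRays.

Section TensorEval.
Variables (R : realType) (k n : nat).

Definition tensor_eval (t : tensor R k n) (ys : 'I_k -> 'rV[R]_n) (a : 'rV[R]_n) : R :=
  \sum_(p : tidx k n) t p * (\prod_j ys j 0 (p.1 j)) * a 0 p.2.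

Lemma tensor_evalE t ys a : tensor_eval t ys a =
  \sum_(f : {ffun 'I_k -> 'I_n}) \sum_(i : 'I_n) t (f, i) * (\prod_j ys j 0 (f j)) * a 0 i.
Proof. by rewrite pair_bigA; apply: eq_bigr => -[f i] _. Qed.

Lemma tensor_eval_sum q (lam : 'I_q -> R) (ts : 'I_q -> tensor R k n) ys a :
  tensor_eval (\sum_i lam i *: ts i) ys a = \sum_i lam i * tensor_eval (ts i) ys a.
Proof.
rewrite /tensor_eval; under eq_bigr do rewrite sum_ffunE mulr_suml mulr_suml.
rewrite exchange_big; apply: eq_bigr => i _; rewrite mulr_sumr.
by apply: eq_bigr => p _; rewrite ffunE !mulrA.
Qed.

Lemma tensor_eval_etensor (psis : 'I_k -> 'rV[R]_n) x ys a :
  tensor_eval (etensor psis x) ys a = (\prod_j pairing (psis j) (ys j)) * pairing x a.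
Proof.
rewrite tensor_evalE /pairing bigA_distr_bigA mulr_suml; apply: eq_bigr => f _.
rewrite mulr_sumr; apply: eq_bigr => i _; rewrite ffunE /= big_split /=.
by rewrite [_ * x 0 i * _]mulrAC -!mulrA.
Qed.

Lemma tensor_eval_gamma phi ys a :
  tensor_eval (gamma k phi) ys a =
  k%:R^-1 * \sum_j (\prod_(l | l != j) pairing phi (ys l)) * pairing (ys j) a.
Proof.
rewrite tensor_evalE.
have sum_slot f : \sum_i gamma k phi (f, i) * (\prod_j ys j 0 (f j)) * a 0 i =
    k%:R^-1 * \sum_j \sum_i (\prod_(l | l != j) phi 0 (f l)) * (f j == i)%:R *
      ((\prod_l ys l 0 (f l)) * a 0 i).
  rewrite exchange_big mulr_sumr; apply: eq_bigr => i _; rewrite ffunE -!mulrA.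
  by congr (_ * _); rewrite mulr_suml.
rewrite (eq_bigr _ (fun f _ => sum_slot f)).
rewrite -mulr_sumr; congr (_ * _); rewrite exchange_big; apply: eq_bigr => j _.
(* Only [i = f j] survives, so each summand is a product over the slots. *)
pose H l b := if l == j then ys j 0 b * a 0 b else phi 0 b * ys l 0 b.
rewrite (eq_bigr (fun f : {ffun 'I_k -> 'I_n} => \prod_l H l (f l))); last first.
  move=> f _; rewrite (bigD1 (f j)) //= eqxx mulr1 [X in _ + X]big1 ?addr0; last first.
    by move=> i fji; rewrite eq_sym (negbTE fji) mulr0 mul0r.
  rewrite [X in _ * (X * _)](bigD1 j) //= [RHS](bigD1 j) //= /H eqxx.
  rewrite [in RHS](eq_bigr (fun l => phi 0 (f l) * ys l 0 (f l))); last first.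
    by move=> l /negbTE ->.
  rewrite big_split /=.
  set P1 := \prod_(l | l != j) phi 0 (f l); set P2 := \prod_(l | l != j) ys l 0 (f l).
  by ring.
rewrite -bigA_distr_bigA (bigD1 j) //= mulrC /H eqxx; congr (_ * _).
by apply: eq_bigr => l /negbTE ->.
Qed.

Lemma etensor_slot (psis : 'I_k -> 'rV[R]_n) j0 q (mu : 'I_q -> R)
    (phs : 'I_q -> 'rV[R]_n) x :
  psis j0 = \sum_l mu l *: phs l ->
  etensor psis x = \sum_l mu l *: etensor (dfwith psis j0 (phs l)) x.
Proof.
move=> psis_j0; apply/ffunP => p; rewrite sum_ffunE ffunE (bigD1 j0) //= psis_j0 summxE.
rewrite !mulr_suml; apply: eq_bigr => l _; rewrite !ffunE [in RHS](bigD1 j0) //=.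
rewrite dfwithin !mxE; under [in RHS]eq_bigr => j /negbTE j_j0 do
  rewrite dfwithout 1?eq_sym ?j_j0 //.
by rewrite /GRing.scale /= -!mulrA.
Qed.

Lemma etensor_sumr (psis : 'I_k -> 'rV[R]_n) q (mu : 'I_q -> R) (xs : 'I_q -> 'rV[R]_n) :
  etensor psis (\sum_l mu l *: xs l) = \sum_l mu l *: etensor psis (xs l).
Proof.
apply/ffunP => p; rewrite sum_ffunE ffunE summxE mulr_sumr; apply: eq_bigr => l _.
by rewrite !ffunE !mxE /GRing.scale /= mulrCA.
Qed.

Lemma etensor_conic (Q : set (tensor R k n)) (A : 'I_k -> set 'rV[R]_n)
    (B : set 'rV[R]_n) psis x : is_conic Q ->
  (forall j, conic_hull (A j) (psis j)) -> conic_hull B x ->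
  (forall phs v, (forall j, A j (phs j)) -> B v -> Q (etensor phs v)) ->
  Q (etensor psis x).
Proof.
move=> Q_conic psis_A [q [mu [xs [mu_ge0 Bxs ->]]]] QAB.
rewrite etensor_sumr; apply: conic_sum => // l _.
(* Induction on the number [r] of slots still to be expanded. *)
suff expand r ps : (forall j, conic_hull (A j) (ps j)) ->
    (forall j : 'I_k, (r <= j)%N -> A j (ps j)) -> Q (etensor ps (xs l)).
  by apply: (expand k) => // j; rewrite leqNgt ltn_ord.
elim: r ps => [|r IH] ps ps_A ps_r; first by apply: QAB => // j; apply: ps_r.
have [kr|rk] := leqP k r.
  by apply: IH => // j rj; have := leq_trans kr rj; rewrite leqNgt ltn_ord.
have [q' [nu [phs [nu_ge0 Aphs ps_r'E]]]] := ps_A (Ordinal rk).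
rewrite (etensor_slot _ ps_r'E); apply: conic_sum => // m _; apply: IH.
  by move=> j; case: dfwithP => [|j' _]; [apply: sub_conic_hull; exact: Aphs|exact: ps_A].
move=> j; case: dfwithP => [_|j' r_j' rj']; first exact: Aphs.
apply: ps_r; rewrite ltn_neqAle rj' andbT.
by apply: contraNneq r_j' => r_j'; apply/eqP/val_inj.
Qed.

End TensorEval.

Section Main.
Variables (R : realType) (n k : nat) (C : set 'rV[R]_n) (phi : 'rV[R]_n)
  (psiF : set 'rV[R]_n -> 'rV[R]_n).
Hypotheses (C_proper : proper_cone C) (phi_int : interior (dual_cone C) phi)
  (k_gt0 : (0 < k)%N).

Local Notation K := (Kphi C phi).

Hypothesis psiF_facet : forall F, facet K F ->
  dual_cone C (psiF F) /\ F = [set x | K x /\ pairing (psiF F) x = 0].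

Variables (m : nat) (lam : 'I_m -> R) (psis : 'I_m -> 'I_k -> 'rV[R]_n)
  (xs : 'I_m -> 'rV[R]_n).
Hypotheses (lam_ge0 : forall i, 0 <= lam i)
  (psis_dual : forall i j, dual_cone C (psis i j)) (xs_C : forall i, C (xs i))
  (gammaE : gamma k phi = \sum_i lam i *: etensor (psis i) (xs i)).

Lemma C_conic : is_conic C.
Proof. by case: C_proper. Qed.

Lemma phi_pos y : C y -> y != 0 -> 0 < pairing phi y.
Proof.
move=> Cy y0; have [d d_gt0 /(_ y Cy)] := interior_shift y phi_int.
rewrite pairingBl pairingZl subr_ge0; apply: lt_le_trans.
rewrite mulr_gt0 // lt_neqAle pairing_self_ge0 andbT eq_sym.
by apply: contra_neq y0 => /pairing_self_eq0.
Qed.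

Definition normalize (y : 'rV[R]_n) := (pairing phi y)^-1 *: y.

Lemma normalize_K y : C y -> y != 0 -> K (normalize y).
Proof.
move=> Cy y0; have phi_y := phi_pos Cy y0; split.
  by have [_ [_ CZ]] := C_conic; apply: CZ; rewrite // invr_ge0 ltW.
by rewrite pairingZr mulVf // gt_eqF.
Qed.

Lemma normalizeK y : C y -> y != 0 -> pairing phi y *: normalize y = y.
Proof. by move=> Cy y0; rewrite scalerA mulfV ?scale1r // gt_eqF // phi_pos. Qed.

Lemma K_span a : (forall y, K y -> pairing a y = 0) -> a = 0.
Proof.
move=> aK0; case: C_proper => _ _ _; apply=> x Cx.
have [->|x0] := eqVneq x 0; first exact: pairing0r.
by rewrite -(normalizeK Cx x0) pairingZr aK0 ?mulr0 //; exact: normalize_K.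
Qed.

Lemma gamma_diag y : pairing phi y ^+ k.-1 *: y =
  \sum_i (lam i * \prod_j pairing (psis i j) y) *: xs i.
Proof.
apply: pairing_inj => a; rewrite !(pairingC a).
have := tensor_eval_gamma (k := k) phi (fun=> y) a; rewrite gammaE tensor_eval_sum.
under eq_bigr do rewrite tensor_eval_etensor.
have prod_phi (j : 'I_k) : \prod_(l < k | l != j) pairing phi y = pairing phi y ^+ k.-1.
  have -> : k.-1 = #|predC1 j| by rewrite cardC1 card_ord.
  by rewrite -prodr_const; apply: eq_bigl => l; rewrite !inE.
under [in X in _ = X -> _]eq_bigr do rewrite prod_phi.
rewrite -mulr_suml sumr_const card_ord -[pairing phi y ^+ k.-1 *+ k]mulr_natl.
rewrite mulrA mulKf ?pnatr_eq0 -?lt0n //.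
move=> sumE; rewrite pairingZl -sumE pairing_suml; apply: eq_bigr => i _.
by rewrite pairingZl mulrA.
Qed.

Lemma C_conic_xs y : C y ->
  exists2 c : 'I_m -> R, (forall i, 0 <= c i) & y = \sum_i c i *: xs i.
Proof.
move=> Cy; have [->|y0] := eqVneq y 0.
  by exists (fun=> 0) => //; rewrite big1 // => i _; rewrite scale0r.
have phik_gt0 : 0 < pairing phi y ^+ k.-1 by rewrite exprn_gt0 // phi_pos.
exists (fun i => (pairing phi y ^+ k.-1)^-1 * (lam i * \prod_j pairing (psis i j) y)).
  move=> i; apply: mulr_ge0; first by rewrite invr_ge0 ltW.
  by apply: mulr_ge0; [exact: lam_ge0|apply: prodr_ge0 => j _; apply: psis_dual].
apply: (scalerI (lt0r_neq0 phik_gt0)); rewrite gamma_diag scaler_sumr.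
by apply: eq_bigr => i _; rewrite scalerA mulrA mulfV ?mul1r // lt0r_neq0.
Qed.

Lemma hcone_xs : hcone xs = dual_cone C.
Proof.
apply/seteqP; split => psi psi_h; last by move=> i; apply: psi_h.
move=> x /C_conic_xs [c c_ge0 ->]; rewrite pairing_sumr.
by apply: sumr_ge0 => i _; rewrite pairingZr mulr_ge0.
Qed.

Lemma xs_span d : (forall i, pairing d (xs i) = 0) -> d = 0.
Proof.
move=> d_xs; case: C_proper => _ _ _; apply=> x /C_conic_xs [c _ ->].
by rewrite pairing_sumr big1 // => i _; rewrite pairingZr d_xs mulr0.
Qed.

Definition kface psi := [set y | K y /\ pairing psi y = 0].

Lemma extreme_kface_colinear psi beta : extreme_ray xs psi ->
  (forall y, kface psi y -> pairing beta y = 0) -> exists c, beta = c *: psi.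
Proof.
case=> psi_h psi0 rk beta0; apply: (corank1_ann_colinear rk psi0 (tight_mx_self xs psi)).
apply/tight_mx_ann => i psi_xi; rewrite pairingC.
have [->|xi0] := eqVneq (xs i) 0; first exact: pairing0r.
rewrite -(normalizeK (xs_C i) xi0) pairingZr beta0 ?mulr0 //.
by split; [exact: normalize_K|rewrite pairingZr psi_xi mulr0].
Qed.

Lemma extreme_facet psi : extreme_ray xs psi -> facet K (kface psi).
Proof.
move=> psi_e; have [psi_h psi0 _] := psi_e.
have psi_dual : dual_cone C psi by rewrite -hcone_xs.
split.
- by exists psi, 0; split => // y [Cy _]; exact: psi_dual.
- move=> kfaceK; move/eqP: psi0; apply; apply: K_span => y Ky.
  by rewrite -kfaceK in Ky; case: Ky.
move=> G [a [c [_ ->]]] kface_sub.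
have [l a_phi] : exists l, a - c *: phi = l *: psi.
  apply: extreme_kface_colinear => // y /[dup] /kface_sub [[_ phi_y] a_y] _.
  by rewrite pairingBl pairingZl a_y phi_y mulr1 subrr.
have aK y : K y -> pairing a y - c = l * pairing psi y.
  by move=> [_ phi_y]; rewrite -pairingZl -a_phi pairingBl pairingZl phi_y mulr1.
have [l0|l0] := eqVneq l 0.
  right; apply/seteqP; split => y; first by case.
  by move=> Ky; split => //; apply/eqP; rewrite -subr_eq0 aK // l0 mul0r.
left; apply/seteqP; split => y [Ky a_y]; split => //.
  by move/eqP: (aK y Ky); rewrite a_y subrr eq_sym mulf_eq0 (negbTE l0) => /eqP.
by apply/eqP; rewrite -subr_eq0 aK // a_y mulr0.
Qed.

Lemma extreme_psiF psi : extreme_ray xs psi ->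
  exists2 c, 0 < c & psi = c *: psiF (kface psi).
Proof.
move=> psi_e; have [psi_h psi0 _] := psi_e.
have psi_dual : dual_cone C psi by rewrite -hcone_xs.
have [psiF_dual kfaceE] := psiF_facet (extreme_facet psi_e).
have [l psiF_l] : exists l, psiF (kface psi) = l *: psi.
  by apply: extreme_kface_colinear => // y; rewrite {1}kfaceE => -[].
have [y Ky psi_y] : exists2 y, K y & 0 < pairing psi y.
  case: (pselect (exists2 y, K y & 0 < pairing psi y)) => // no_y.
  case/negP: psi0; apply/eqP; apply: K_span => y Ky; apply/eqP.
  rewrite eq_le psi_dual; last by case: Ky.
  by rewrite andbT leNgt; apply/negP => ?; apply: no_y; exists y.
have l_gt0 : 0 < l.
  have := psiF_dual y (proj1 Ky); rewrite psiF_l pairingZl pmulr_lge0 // le0r.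
  case/orP => [/eqP l0|//]; exfalso; case: (extreme_facet psi_e) => _ + _; apply.
  rewrite kfaceE psiF_l l0 scale0r.
  by apply/seteqP; split=> z; [case|split; rewrite ?pairing0l].
exists l^-1; first by rewrite invr_gt0.
by rewrite psiF_l scalerA mulVf ?scale1r // gt_eqF.
Qed.

Definition tight_set psi : {set 'I_m} := [set i | pairing psi (xs i) == 0].

(* An extreme ray of [dual_cone C] is determined by its tight set, so one
   representative per subset of ['I_m] lists them all. *)
Definition ray_rep (T : {set 'I_m}) :=
  xget 0 [set psi | extreme_ray xs psi /\ tight_set psi = T].

Definition rays (i : 'I_#|{set 'I_m}|) := ray_rep (enum_val i).

Lemma rays_dual i : dual_cone C (rays i).
Proof.
rewrite /rays /ray_rep; case: xgetP => [psi _ [[psi_h _ _] _]|_].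
  by rewrite -hcone_xs.
by move=> x _; rewrite pairing0l.
Qed.

Lemma extreme_rays psi : extreme_ray xs psi ->
  exists2 c, 0 < c & psi = c *: rays (enum_rank (tight_set psi)).
Proof.
move=> psi_e; rewrite /rays enum_rankK /ray_rep.
case: xgetP => [rep _ [rep_e rep_T]|no_rep]; last by case: (no_rep psi).
have [psi_h psi0 rk] := psi_e; have [rep_h rep0 _] := rep_e.
have rep_tight : tight_mx xs psi *m rep^T = 0.
  apply/tight_mx_ann => i /eqP psi_xi; rewrite pairingC; apply/eqP.
  have : i \in tight_set rep by rewrite rep_T inE psi_xi.
  by rewrite inE.
have [c psiE] := corank1_ann_colinear rk rep0 rep_tight (tight_mx_self xs psi).
exists c => //; have := hcone_sum_gt0 xs_span psi_h psi0.
by rewrite psiE pairingZl pmulr_lgt0 // (hcone_sum_gt0 xs_span rep_h rep0).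
Qed.

Lemma hcone_rays : hcone rays = C.
Proof.
apply/seteqP; split => x x_h; last by move=> i; rewrite pairingC; apply: rays_dual.
have [c [c_ge0 ->]] : exists c : 'I_m -> R, (forall i, 0 <= c i) /\ x = \sum_i c i *: xs i.
  apply: farkas => y y_h; rewrite pairingC.
  have y_conic : conic_hull (extreme_ray xs) y.
    by apply: (hcone_conic_extreme xs_span) => i; rewrite pairingC; exact: y_h.
  apply: (conic_hull_min (is_conic_pairing_ge0 x) _ y_conic).
  move=> w /extreme_rays [c c_gt0 ->].
  rewrite /= pairingZl; apply: mulr_ge0; first exact: ltW.
  by rewrite pairingC; apply: x_h.
by apply: conic_sum C_conic c_ge0 _ => i _.
Qed.

Lemma rays_span d : (forall i, pairing d (rays i) = 0) -> d = 0.
Proof.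
move=> d_rays; case: C_proper => _ _ pointed _.
by apply: pointed; rewrite -hcone_rays => i; rewrite ?pairingNl d_rays ?oppr0.
Qed.

Lemma extreme_vertex x : extreme_ray rays x -> vertex K (normalize x).
Proof.
case=> x_h x0 rk; have Cx : C x by rewrite -hcone_rays.
(* The sum of the rays tight at [x] exposes the ray through [x]. *)
pose alpha := \sum_(i | pairing x (rays i) == 0) rays i.
have alpha_dual : dual_cone C alpha.
  by move=> y Cy; rewrite pairing_suml; apply: sumr_ge0 => i _; apply: rays_dual.
exists alpha, 0; split => [y [Cy _]|]; first exact: alpha_dual.
apply/seteqP; split => [y ->|y [Ky alpha_y]].
  split; first exact: normalize_K.
  rewrite pairing_suml big1 // => i /eqP x_i.
  by rewrite pairingZr (pairingC (rays i)) x_i mulr0.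
have y_tight i : pairing x (rays i) = 0 -> pairing (rays i) y = 0.
  move=> x_i; move: alpha_y; rewrite pairing_suml => sum0.
  by apply: (psumr_eq0P _ sum0); [move=> j _; apply: rays_dual; case: Ky|exact/eqP].
have [c yE] := corank1_ann_colinear rk x0 (tight_mx_self rays x)
  ((tight_mx_ann rays x y).2 y_tight).
have phi_x0 : pairing phi x != 0 by rewrite gt_eqF ?phi_pos.
have c_phi : c * pairing phi x = 1 by case: Ky => _; rewrite yE pairingZr.
rewrite yE /normalize (_ : c = (pairing phi x)^-1) //.
by apply: (mulIf phi_x0); rewrite c_phi mulVf.
Qed.

Definition supported_vertices x := [set v | vertex K v /\
  forall alpha, dual_cone C alpha -> pairing alpha x = 0 -> pairing alpha v = 0].

Lemma C_conic_vertices x : C x -> conic_hull (supported_vertices x) x.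
Proof.
rewrite -{1}hcone_rays => x_h.
have [q [mu [w [mu_ge0 w_e xE]]]] := hcone_conic_extreme rays_span x_h.
have w_C l : C (w l) by have [w_h _ _] := w_e l; rewrite -hcone_rays.
have [_ [_ coneZ]] := is_conic_hull (supported_vertices x).
rewrite {2}xE; apply: (conic_sum (is_conic_hull _) mu_ge0) => l mu_gt0.
have [_ w0 _] := w_e l; rewrite -(normalizeK (w_C l) w0).
apply: coneZ; first exact/ltW/phi_pos.
apply: sub_conic_hull; split; first exact: extreme_vertex.
move=> alpha alpha_dual alpha_x; rewrite pairingZr (pairingC alpha).
rewrite (pairing_sum_eq0 mu_ge0 _ _ mu_gt0) ?mulr0 // => [l' _|].
  by rewrite pairingC; apply: alpha_dual.
by rewrite pairingC -xE.
Qed.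

Definition facet_normals (Z : set 'rV[R]_n) :=
  [set psiF F | F in [set F | facet K F /\ Z `<=` F]].

Lemma dual_conic_facets psi : dual_cone C psi ->
  conic_hull (facet_normals (kface psi)) psi.
Proof.
rewrite -hcone_xs => psi_h.
have [q [mu [w [mu_ge0 w_e psiE]]]] := hcone_conic_extreme xs_span psi_h.
have [_ [_ coneZ]] := is_conic_hull (facet_normals (kface psi)).
rewrite {2}psiE; apply: (conic_sum (is_conic_hull _) mu_ge0) => l mu_gt0.
have [c c_gt0 ->] := extreme_psiF (w_e l).
apply: coneZ; first exact: ltW.
apply: sub_conic_hull; exists (kface (w l)) => //; split; first exact: extreme_facet.
move=> y [Ky psi_y]; split => //.
apply: (pairing_sum_eq0 mu_ge0 _ _ mu_gt0) => [l' _|]; last by rewrite -psiE.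
by have [w_h _ _] := w_e l'; rewrite hcone_xs in w_h; apply: w_h; case: Ky.
Qed.

(* [gamma] vanishes on such a tuple while every term of its decomposition is
   nonnegative there. *)
Lemma gamma_eval_face alpha (ys : 'I_k -> 'rV[R]_n) i : dual_cone C alpha ->
  (forall j, C (ys j) /\ pairing alpha (ys j) = 0) ->
  lam i * ((\prod_j pairing (psis i j) (ys j)) * pairing (xs i) alpha) = 0.
Proof.
move=> alpha_dual ys_face.
have term_ge0 i' :
    0 <= lam i' * ((\prod_j pairing (psis i' j) (ys j)) * pairing (xs i') alpha).
  apply: mulr_ge0; first exact: lam_ge0.
  apply: mulr_ge0; first by apply: prodr_ge0 => j _; apply: psis_dual; case: (ys_face j).
  by rewrite pairingC; apply: alpha_dual.
have sum0 : \sum_i lam i * ((\prod_j pairing (psis i j) (ys j)) * pairing (xs i) alpha) = 0.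
  have := tensor_eval_gamma phi ys alpha; rewrite gammaE tensor_eval_sum.
  under eq_bigr do rewrite tensor_eval_etensor.
  move=> ->; rewrite big1 ?mulr0 // => j _.
  by rewrite pairingC (ys_face j).2 mulr0.
exact: (psumr_eq0P (fun i' _ => term_ge0 i') sum0).
Qed.

Lemma psis_vanish_on_face i alpha (G : set 'rV[R]_n) : 0 < lam i ->
  dual_cone C alpha -> (forall y, G y -> C y /\ pairing alpha y = 0) ->
  pairing alpha (xs i) != 0 -> exists j, forall y, G y -> pairing (psis i j) y = 0.
Proof.
move=> lam_gt0 alpha_dual G_face alpha_xi; apply: contrapT => /forallNP no_j.
have /choice [ys ys_G] : forall j, exists y, G y /\ pairing (psis i j) y != 0.
  by move=> j; have /existsNP [y /not_implyP [Gy /eqP nz]] := no_j j; exists y.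
have := gamma_eval_face i alpha_dual (fun j => G_face _ (ys_G j).1).
apply/eqP; rewrite !mulf_eq0 (gt_eqF lam_gt0) [pairing (xs i) _]pairingC.
rewrite (negbTE alpha_xi) orbF /=; apply/prodf_neq0 => j _; exact: (ys_G j).2.
Qed.

Lemma supported_admissible i (Fs : 'I_k -> set 'rV[R]_n) v : 0 < lam i ->
  (forall j, facet K (Fs j) /\ kface (psis i j) `<=` Fs j) ->
  supported_vertices (xs i) v -> admissible K Fs v.
Proof.
move=> lam_gt0 Fs_facet [v_vertex v_supp]; split => [j|//|G G_facet Gv].
  by case: (Fs_facet j).
have [psiG_dual GE] := psiF_facet G_facet.
have G_sub y : G y -> K y /\ pairing (psiF G) y = 0 by rewrite {1}GE.
have psiG_xi : pairing (psiF G) (xs i) != 0.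
  apply/eqP => /(v_supp _ psiG_dual) psiG_v; apply: Gv.
  by rewrite GE; split => //; exact: vertex_mem.
have [j psis_G] : exists j, forall y, G y -> pairing (psis i j) y = 0.
  apply: (psis_vanish_on_face lam_gt0 psiG_dual _ psiG_xi) => y /G_sub [[Cy _] psiG_y].
  by split.
exists j; have [Fj_facet kface_Fj] := Fs_facet j.
have G_Fj : G `<=` Fs j.
  by move=> y Gy; apply: kface_Fj; split; [exact: (G_sub y Gy).1|exact: psis_G].
have [Fj_face Fj_K _] := Fj_facet.
by case: G_facet => _ _ /(_ _ Fj_face G_Fj) [].
Qed.

Definition admissible_tensors : set (tensor R k n) :=
  [set t | exists Fs x, admissible K Fs x /\ t = etensor (fun j => psiF (Fs j)) x].

Lemma etensor_admissible i : 0 < lam i ->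
  conic_hull admissible_tensors (etensor (psis i) (xs i)).
Proof.
move=> lam_gt0.
apply: (etensor_conic (A := fun j => facet_normals (kface (psis i j)))
                      (B := supported_vertices (xs i))).
- exact: is_conic_hull.
- by move=> j; apply: dual_conic_facets.
- exact: C_conic_vertices.
move=> phs v phs_normals v_supp.
have /choice [Fs Fs_phs] : forall j, exists F,
    (facet K F /\ kface (psis i j) `<=` F) /\ psiF F = phs j.
  by move=> j; have [F ? ?] := phs_normals j; exists F.
apply: sub_conic_hull; exists Fs, v; split.
  by apply: (supported_admissible lam_gt0) => // j; case: (Fs_phs j).
by congr etensor; apply/funext => j; case: (Fs_phs j).
Qed.

Lemma gamma_conic : conic_hull admissible_tensors (gamma k phi).
Proof.
rewrite gammaE; apply: (conic_sum (is_conic_hull _) lam_ge0) => i.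
exact: etensor_admissible.
Qed.

End Main.

Theorem lemma4 (R : realType) (n k : nat) (C : set 'rV[R]_n) (phi : 'rV[R]_n)
  (psiF : set 'rV[R]_n -> 'rV[R]_n) :
  proper_cone C ->
  interior (dual_cone C) phi ->
  (0 < k)%N ->
  entanglement_breaking k C phi ->
  (forall F, facet (Kphi C phi) F ->
     dual_cone C (psiF F) /\
     F = [set x | Kphi C phi x /\ pairing (psiF F) x = 0]) ->
  cone_gen [set t | exists (Fs : 'I_k -> set 'rV[R]_n) (x : 'rV[R]_n),
                      admissible (Kphi C phi) Fs x /\
                      t = etensor (fun j => psiF (Fs j)) x]
           (gamma k phi).
Proof.
move=> C_proper phi_int k_gt0 [m [lam [psis [xs [lam_ge0 _ psis_dual xs_C gammaE]]]]].
move=> psiF_facet.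
exact: (gamma_conic C_proper phi_int k_gt0 psiF_facet lam_ge0 psis_dual xs_C gammaE).
Qed.
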